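(* Let $t$ be a positive integer, $s\ge 2$, and let $G=K(n_1,\dots,n_s)$ be a complete $s$-partite graph with parts $V_1,\dots,V_s$, $|V_j|=n_j$. Let $f$ be a $t$-relaxed coloring of $G$. If a color $i$ appears on exactly $r\ge 2$ parts of $G$ (i.e. exactly $r$ parts contain a vertex $v$ with $f(v)=i$), then $|f^{-1}(i)|\le t+\left\lfloor \frac{t}{r-1}\right\rfloor$.
   Context: $K(n_1,\dots,n_s)$ denotes the complete $s$-partite graph whose parts have $n_1,\dots,n_s\ge 1$ vertices. A map $f$ from $V(G)$ to a finite set of colors is a $t$-relaxed coloring if every vertex $u$ has at most $t$ neighbors $v$ with $f(v)=f(u)$. $f^{-1}(i)$ is the set of vertices receiving color $i$. *)

From mathcomp Require Import all_boot.
Set Implicit Arguments. Unset Strict Implicit. Unset Printing Implicit Defensive.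

(* The complete s-partite graph K(n_1,...,n_s): vertex set V (a finType),
   part map [part : V -> 'I_s] (vertex v lies in part V_(part v)); every part
   is nonempty ([part] surjective), and |V_j| = n_j := #|part @^-1 j|. *)
Definition kpart_adj (V : finType) (s : nat) (part : V -> 'I_s) : rel V :=
  fun u v => part u != part v.

Definition parts_nonempty (V : finType) (s : nat) (part : V -> 'I_s) : Prop :=
  forall j : 'I_s, exists v : V, part v = j.

Definition relaxed_coloring (V : finType) (C : eqType) (adj : rel V)
    (t : nat) (f : V -> C) : Prop :=
  forall u : V, #|[set v | adj u v && (f v == f u)]| <= t.

Definition color_class (V : finType) (C : eqType) (f : V -> C) (i : C) : {set V} :=
  [set v | f v == i].

Definition parts_with_color (V : finType) (C : eqType) (s : nat)
    (part : V -> 'I_s) (f : V -> C) (i : C) : {set 'I_s} :=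
  [set j | [exists v, (part v == j) && (f v == i)]].

From mathcomp Require Import all_boot.
From mathcomp Require Import zify.

Set Implicit Arguments.
Unset Strict Implicit.

(* Let A be the colour class of i and a_j = |A ∩ V_j|.  Every part V_j met by
   A contains a vertex u of colour i, and the neighbours of u sharing its
   colour are exactly the vertices of A outside V_j, so |A| - a_j <= t.
   Summing over the r parts met by A gives r|A| - |A| <= rt, that is
   (r - 1)(|A| - t) <= t. *)

Lemma card_setI_fibres (T I : finType) (g : T -> I) (A : {set T}) (P : {pred I}) :
  {in A, forall x, g x \in P} ->
  #|A| = \sum_(j in P) #|A :&: [set x | g x == j]|.
Proof.
move=> gAP; rewrite -sum1_card (partition_big g P) //.
apply: eq_bigr => j _; rewrite -sum1_card; apply: eq_bigl => x.
by rewrite !inE andbC.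
Qed.

Lemma leq_addn_div_of_mul (x t k : nat) :
  0 < k -> (x - t) * k <= t -> x <= t + t %/ k.
Proof. by move=> k_gt0; rewrite -leq_divRL // leq_subLR. Qed.

Section RelaxedColouringOfMultipartite.

Variables (V : finType) (C : eqType) (s t : nat).
Variables (part : V -> 'I_s) (f : V -> C).
Hypothesis f_relaxed : relaxed_coloring (kpart_adj part) t f.

Definition part_class (j : 'I_s) : {set V} := [set v | part v == j].

Lemma card_color_class_le_part (i : C) (j : 'I_s) :
  j \in parts_with_color part f i ->
  #|color_class f i| <= t + #|color_class f i :&: part_class j|.
Proof.
rewrite inE => /existsP [u /andP [/eqP part_u /eqP f_u]].
have same_colour_nbrs :
    [set v | kpart_adj part u v && (f v == f u)] = color_class f i :\: part_class j.
  by apply/setP => v; rewrite !inE /kpart_adj part_u f_u eq_sym andbC.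
rewrite -(cardsID (part_class j) (color_class f i)) addnC leq_add2r.
by rewrite -same_colour_nbrs f_relaxed.
Qed.

Lemma card_color_class_sum_parts (i : C) :
  #|color_class f i| =
    \sum_(j in parts_with_color part f i) #|color_class f i :&: part_class j|.
Proof.
apply: card_setI_fibres => v; rewrite !inE => /eqP f_v.
by apply/existsP; exists v; rewrite eqxx f_v eqxx.
Qed.

End RelaxedColouringOfMultipartite.

Theorem lemma2p1 (V : finType) (C : eqType) (s t r : nat)
    (part : V -> 'I_s) (f : V -> C) (i : C) :
  0 < t -> 2 <= s -> parts_nonempty part ->
  relaxed_coloring (kpart_adj part) t f ->
  #|parts_with_color part f i| = r -> 2 <= r ->
  #|color_class f i| <= t + t %/ (r - 1).
Proof.
move=> _ _ _ f_relaxed card_P r_ge2.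
set A := color_class f i; set P := parts_with_color part f i.
have sum_bound : \sum_(j in P) #|A| <= \sum_(j in P) (t + #|A :&: part_class part j|).
  by apply: leq_sum => j; apply: card_color_class_le_part.
rewrite big_split /= -card_color_class_sum_parts -/A !sum_nat_const card_P in sum_bound.
apply: leq_addn_div_of_mul; first lia.
by rewrite mulnBl; nia.
Qed.
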